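(* Let $\kappa > 3/2$ and $T_\mathrm{eff} > 0$ (temperatures in energy units, Boltzmann constant $k=1$), and set $T_0 = (\kappa - 3/2)\,T_\mathrm{eff}$. Let $f_\kappa$ be the kappa electron energy distribution on $E \in (0,\infty)$, $$f^{(\kappa)}_E(E) = \frac{2}{\sqrt{\pi}}\,\frac{\Gamma(\kappa+1)}{\Gamma(\kappa-\tfrac12)}\,T_0^{-3/2}\,\sqrt{E}\,\Bigl(1+\frac{E}{T_0}\Bigr)^{-(\kappa+1)},$$ with velocity-space analogue $f^{(\kappa)}_v(E) = f^{(\kappa)}_E(E)/\sqrt{E}$. Define the radio (source-function) temperature $T_B = \langle E^{-1/2}\rangle_{f_\kappa} / f^{(\kappa)}_v(0)$, where $\langle E^{-1/2}\rangle_{f_\kappa} = \int_0^\infty E^{-1/2} f^{(\kappa)}_E(E)\,dE$. Let $T_\mathrm{EUV} > 0$ be the EUV moment-matched temperature and define the correction $\varepsilon_\mathrm{EUV}$ by $T_\mathrm{EUV} = T_\mathrm{eff}\,(1+\varepsilon_\mathrm{EUV})$. Then $$R \equiv \frac{T_\mathrm{EUV}}{T_B} = \frac{\kappa}{\kappa - 3/2}\,\bigl(1+\varepsilon_\mathrm{EUV}\bigr).$$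
   Context: The distribution $f^{(\kappa)}_E$ is a probability density on $(0,\infty)$ whose mean energy is $\langle E\rangle = \tfrac32 T_\mathrm{eff}$ for every $\kappa>3/2$ (the ''mean-energy'' or Dzifčáková–Dudík convention). The quantity $T_B$ is the ratio of the moment $\langle 1/v\rangle \propto \langle E^{-1/2}\rangle$ (proportional to the low-frequency free-free emissivity) to $f_v(0)$ (proportional to the low-frequency free-free absorption coefficient), normalized so that for a Maxwellian energy density $\frac{2}{\sqrt\pi}T^{-3/2}\sqrt{E}e^{-E/T}$ it returns exactly $T$. The core temperature is $T_\mathrm{core} = \frac{\kappa-3/2}{\kappa}T_\mathrm{eff}$. *)

From Stdlib Require Import Reals.
From Coquelicot Require Import Coquelicot.
Open Scope R_scope.

Definition Gamma (s : R) : R :=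
  RInt_gen (fun t => Rpower t (s - 1) * exp (- t)) (at_right 0) (Rbar_locally p_infty).

Definition T0 (kappa Teff : R) : R := (kappa - 3/2) * Teff.

Definition kappa_norm (kappa Teff : R) : R :=
  2 / sqrt PI * (Gamma (kappa + 1) / Gamma (kappa - 1/2)) * Rpower (T0 kappa Teff) (-(3/2)).

Definition f_kappa_E (kappa Teff E : R) : R :=
  kappa_norm kappa Teff * sqrt E * Rpower (1 + E / T0 kappa Teff) (-(kappa + 1)).

(* velocity-space analogue f_v(E) = f_E(E)/sqrt(E), written with sqrt E cancelled
   so that it is defined (continuously) at E = 0 *)
Definition f_kappa_v (kappa Teff E : R) : R :=
  kappa_norm kappa Teff * Rpower (1 + E / T0 kappa Teff) (-(kappa + 1)).

Definition mean_inv_sqrtE (kappa Teff : R) : R :=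
  RInt_gen (fun E => / sqrt E * f_kappa_E kappa Teff E) (at_right 0) (Rbar_locally p_infty).

Definition T_B (kappa Teff : R) : R := mean_inv_sqrtE kappa Teff / f_kappa_v kappa Teff 0.

(* The square-root factor of f_E cancels against E^(-1/2), so <E^(-1/2)> is the
   normalisation N times the elementary integral of (1 + E/T0)^(-(kappa+1)) over
   (0, oo), namely T0/kappa; since f_v(0) = N as well, T_B = T0/kappa = T_core
   whatever N is, provided N <> 0.  That is where the Gamma factors matter: for
   s >= 1 the integral defining Gamma(s) converges to a positive number, by
   comparison with the constant 1 on (0, 1] and with a multiple of t^(-2) on
   [1, oo). *)

From Stdlib Require Import Reals Lra.
From Coquelicot Require Import Coquelicot.
Open Scope R_scope.

Lemma is_RInt_gen_at_point_l (f : R -> R) (c l : R) (F : (R -> Prop) -> Prop) :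
  Filter F -> F (fun b => ex_RInt f c b) ->
  filterlim (fun b => RInt f c b) F (locally l) -> is_RInt_gen f (at_point c) F l.
Proof.
  intros FF Hex Hlim P HP.
  apply Filter_prod with (fun a => a = c) (fun b => ex_RInt f c b /\ P (RInt f c b)).
  - reflexivity.
  - apply filter_and; [exact Hex | exact (Hlim P HP)].
  - intros a b -> [Hb HPb]. exists (RInt f c b).
    split; [exact (RInt_correct _ _ _ Hb) | exact HPb].
Qed.

Lemma RInt_sub_Chasles (f : R -> R) (c u v : R) :
  ex_RInt f c u -> ex_RInt f c v -> RInt f c v - RInt f c u = RInt f u v.
Proof.
  intros Hu Hv.
  rewrite <- (RInt_Chasles f u c v (ex_RInt_swap f c u Hu) Hv).
  rewrite <- (opp_RInt_swap f c u Hu). unfold plus, opp; simpl. ring.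
Qed.

Definition dominated_on (f g : R -> R) (c b : R) : Prop :=
  ex_RInt f c b /\ ex_RInt g c b /\
  forall x, Rmin c b <= x <= Rmax c b -> 0 <= f x <= g x.

Lemma RInt_increment_bounds (f g : R -> R) (c u v : R) : u <= v ->
  dominated_on f g c u -> dominated_on f g c v ->
  0 <= RInt f c v - RInt f c u <= RInt g c v - RInt g c u.
Proof.
  intros Huv [Fu [Gu Bu]] [Fv [Gv Bv]].
  assert (Bseg : forall x, u < x < v -> 0 <= f x <= g x).
  { intros x Hx. destruct (Rle_dec x c).
    - apply Bu. split.
      + apply Rle_trans with u; [apply Rmin_r | lra].
      + apply Rle_trans with c; [lra | apply Rmax_l].
    - apply Bv. split.
      + apply Rle_trans with c; [apply Rmin_l | lra].
      + apply Rle_trans with v; [lra | apply Rmax_r]. }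
  rewrite !RInt_sub_Chasles by assumption.
  split.
  - apply RInt_ge_0; [exact Huv | exact (ex_RInt_Chasles f u c v (ex_RInt_swap f c u Fu) Fv) |].
    intros x Hx. apply Bseg, Hx.
  - apply RInt_le; [exact Huv | exact (ex_RInt_Chasles f u c v (ex_RInt_swap f c u Fu) Fv)
                   | exact (ex_RInt_Chasles g u c v (ex_RInt_swap g c u Gu) Gv) |].
    intros x Hx. apply Bseg, Hx.
Qed.

Lemma RInt_increment_le (f g : R -> R) (c u v : R) :
  dominated_on f g c u -> dominated_on f g c v ->
  Rabs (RInt f c v - RInt f c u) <= Rabs (RInt g c v - RInt g c u).
Proof.
  intros Du Dv. destruct (Rle_dec u v) as [Huv | Hvu].
  - destruct (RInt_increment_bounds f g c u v Huv Du Dv).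
    rewrite !Rabs_right by lra. lra.
  - rewrite (Rabs_minus_sym (RInt f c v)), (Rabs_minus_sym (RInt g c v)).
    destruct (RInt_increment_bounds f g c v u ltac:(lra) Dv Du).
    rewrite !Rabs_right by lra. lra.
Qed.

Lemma ex_filterlim_RInt_comparison (f g : R -> R) (c lg : R) (F : (R -> Prop) -> Prop) :
  ProperFilter F -> F (dominated_on f g c) ->
  filterlim (fun b => RInt g c b) F (locally lg) ->
  exists lf, filterlim (fun b => RInt f c b) F (locally lf).
Proof.
  intros FF Hdom Hg.
  apply (filterlim_locally_cauchy (U := R_CompleteSpace)). intros eps.
  destruct (proj2 (filterlim_locally_cauchy (U := R_CompleteSpace) (fun b => RInt g c b))
              (ex_intro _ lg Hg) eps) as [P [HP Hcauchy]].
  exists (fun b => P b /\ dominated_on f g c b). split; [now apply filter_and |].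
  intros u v [Pu Du] [Pv Dv].
  exact (Rle_lt_trans _ _ _ (RInt_increment_le f g c u v Du Dv) (Hcauchy u v Pu Pv)).
Qed.

Lemma exp_le_compat (x y : R) : x <= y -> exp x <= exp y.
Proof. intros [H | ->]; [left; apply exp_increasing, H | right; reflexivity]. Qed.

Lemma Rpower_le_1 (t y : R) : 0 < t <= 1 -> 0 <= y -> Rpower t y <= 1.
Proof.
  intros Ht Hy. unfold Rpower. rewrite <- exp_0. apply exp_le_compat.
  assert (ln t <= 0) by (rewrite <- ln_1; apply ln_le; lra). nra.
Qed.

Lemma Rpower_le_exp (a t : R) : 0 < a -> 0 < t -> Rpower t a <= Rpower a a * exp t.
Proof.
  intros Ha Ht.
  replace (Rpower t a) with (Rpower a a * Rpower (t / a) a)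
    by (rewrite Rpower_mult_distr by (try apply Rdiv_lt_0_compat; lra); f_equal; field; lra).
  apply Rmult_le_compat_l; [unfold Rpower; left; apply exp_pos |].
  replace (exp t) with (Rpower (exp (t / a)) a)
    by (unfold Rpower; rewrite ln_exp; f_equal; field; lra).
  apply Rle_Rpower_l; [lra |]. split; [apply Rdiv_lt_0_compat; lra |].
  pose proof (exp_ineq1_le (t / a)). lra.
Qed.

Definition gamma_integrand (s t : R) : R := Rpower t (s - 1) * exp (- t).

Lemma gamma_integrand_continuous (s t : R) : 0 < t -> continuous (gamma_integrand s) t.
Proof.
  intros Ht. apply (ex_derive_continuous (V := R_NormedModule)).
  unfold gamma_integrand, Rpower. auto_derive. exact Ht.
Qed.

Lemma gamma_integrand_pos (s t : R) : 0 < gamma_integrand s t.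
Proof. apply Rmult_lt_0_compat; apply exp_pos. Qed.

Lemma ex_RInt_gamma_integrand (s a b : R) : 0 < a -> 0 < b -> ex_RInt (gamma_integrand s) a b.
Proof.
  intros Ha Hb. apply (ex_RInt_continuous (V := R_CompleteNormedModule)).
  intros x [Hx _]. apply gamma_integrand_continuous.
  apply Rlt_le_trans with (Rmin a b); [apply Rmin_case |]; assumption.
Qed.

Lemma gamma_integrand_le_1 (s t : R) : 1 <= s -> 0 < t <= 1 -> gamma_integrand s t <= 1.
Proof.
  intros Hs Ht. unfold gamma_integrand. rewrite <- (Rmult_1_r 1).
  apply Rmult_le_compat; try (left; apply exp_pos).
  - apply Rpower_le_1; lra.
  - rewrite <- exp_0. apply exp_le_compat. lra.
Qed.

Lemma gamma_integrand_le_inv_sqr (s t : R) : -1 < s -> 0 < t ->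
  gamma_integrand s t <= Rpower (s + 1) (s + 1) / t ^ 2.
Proof.
  intros Hs Ht. unfold gamma_integrand.
  assert (Hpow : Rpower t (s + 1) = Rpower t (s - 1) * t ^ 2).
  { rewrite <- Rpower_pow by exact Ht. rewrite <- Rpower_plus. f_equal. simpl. ring. }
  assert (Ht2 : 0 < t ^ 2) by (apply pow_lt; exact Ht).
  apply Rmult_le_reg_r with (t ^ 2); [exact Ht2 |].
  replace (Rpower (s + 1) (s + 1) / t ^ 2 * t ^ 2) with (Rpower (s + 1) (s + 1)) by (field; lra).
  replace (Rpower t (s - 1) * exp (- t) * t ^ 2) with (Rpower t (s + 1) * exp (- t))
    by (rewrite Hpow; ring).
  apply Rmult_le_reg_r with (exp t); [apply exp_pos |].
  rewrite Rmult_assoc, <- exp_plus, Rplus_opp_l, exp_0, Rmult_1_r.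
  apply Rpower_le_exp; lra.
Qed.

Lemma at_right_0_lt (c : R) : 0 < c -> at_right 0 (fun b => 0 < b < c).
Proof.
  intros Hc. exists (mkposreal c Hc). intros y Hy Hy0.
  change (Rabs (y - 0) < c) in Hy. apply Rabs_def2 in Hy. lra.
Qed.

Lemma is_lim_div_p_infty (K : R) : is_lim (fun x => K / x) p_infty 0.
Proof.
  replace (Finite 0) with (Rbar_mult K (Rbar_inv p_infty)) by (simpl; f_equal; ring).
  apply is_lim_scal_l, is_lim_inv; [apply is_lim_id | discriminate].
Qed.

Lemma is_RInt_inv_sqr (K a b : R) : 0 < a -> 0 < b ->
  is_RInt (fun t => K / t ^ 2) a b (K / a - K / b).
Proof.
  intros Ha Hb.
  assert (Hseg : forall x, Rmin a b <= x <= Rmax a b -> 0 < x)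
    by (intros x [Hx _]; apply Rlt_le_trans with (Rmin a b); [apply Rmin_case |]; assumption).
  replace (K / a - K / b) with (minus (- K / b) (- K / a))
    by (unfold minus, plus, opp; simpl; field; lra).
  apply (is_RInt_derive (V := R_CompleteNormedModule) (fun t => - K / t)).
  - intros x Hx. specialize (Hseg x Hx).
    auto_derive; [apply Rgt_not_eq, Hseg | field; apply Rgt_not_eq, Hseg].
  - intros x Hx. specialize (Hseg x Hx). apply (ex_derive_continuous (V := R_NormedModule)).
    auto_derive. apply Rgt_not_eq. nra.
Qed.

(* The comparison test moves the upper endpoint, so the integral over (0, 1] is
   obtained as the opposite of the limit of [RInt _ 1 b] as b -> 0+. *)
Lemma is_RInt_gen_gamma_head (s : R) : 1 <= s ->
  exists l, is_RInt_gen (gamma_integrand s) (at_right 0) (at_point 1) l /\ 0 <= l.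
Proof.
  intros Hs.
  assert (Hdom : forall b, 0 < b <= 1 -> dominated_on (gamma_integrand s) (fun _ => 1) 1 b).
  { intros b Hb. split; [| split].
    - apply ex_RInt_gamma_integrand; lra.
    - apply ex_RInt_const.
    - intros x Hx. rewrite Rmin_right, Rmax_left in Hx by lra.
      split; [left; apply gamma_integrand_pos | apply gamma_integrand_le_1; lra]. }
  assert (Hnear : at_right 0 (dominated_on (gamma_integrand s) (fun _ => 1) 1)).
  { apply (filter_imp (fun b => 0 < b < 1)); [| apply at_right_0_lt; lra].
    intros b Hb. apply Hdom. lra. }
  assert (Hlim : filterlim (fun b => RInt (fun _ => 1) 1 b) (at_right 0) (locally (0 - 1))).
  { apply (filterlim_ext (F := at_right 0) (fun b => b - 1)).
    { intros b. rewrite RInt_const. unfold scal; simpl; unfold mult; simpl. ring. }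
    eapply filterlim_filter_le_1; [apply filter_le_within |].
    apply (continuous_minus (fun b : R => b) (fun _ => 1));
      [apply continuous_id | apply continuous_const]. }
  destruct (ex_filterlim_RInt_comparison _ _ 1 _ _ (at_right_proper_filter 0) Hnear Hlim)
    as [l Hl].
  exists (- l). split.
  - apply (is_RInt_gen_swap _ l).
    exact (is_RInt_gen_at_point_l _ _ _ _ _ (filter_imp _ _ (fun b Hb => proj1 Hb) Hnear) Hl).
  - assert (Hle : Rbar_le l 0).
    { apply (filterlim_le (F := at_right 0) (fun b => RInt (gamma_integrand s) 1 b) (fun _ => 0)).
      - apply (filter_imp (fun b => 0 < b < 1)); [| apply at_right_0_lt; lra].
        intros b Hb.
        destruct (RInt_increment_bounds _ _ 1 b 1 ltac:(lra) (Hdom b ltac:(lra))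
                                        (Hdom 1 ltac:(lra))).
        rewrite RInt_point in *. unfold zero in *; simpl in *. lra.
      - exact Hl.
      - apply filterlim_const. }
    simpl in Hle. lra.
Qed.

Lemma is_RInt_gen_gamma_tail (s : R) : -1 < s ->
  exists l, is_RInt_gen (gamma_integrand s) (at_point 1) (Rbar_locally p_infty) l /\ 0 < l.
Proof.
  intros Hs. set (K := Rpower (s + 1) (s + 1)).
  assert (Hdom : forall b, 1 < b -> dominated_on (gamma_integrand s) (fun t => K / t ^ 2) 1 b).
  { intros b Hb. split; [| split].
    - apply ex_RInt_gamma_integrand; lra.
    - eexists. apply is_RInt_inv_sqr; lra.
    - intros x Hx. rewrite Rmin_left, Rmax_right in Hx by lra.
      split; [left; apply gamma_integrand_pos | apply gamma_integrand_le_inv_sqr; lra]. }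
  assert (Hnear : Rbar_locally p_infty
                    (dominated_on (gamma_integrand s) (fun t => K / t ^ 2) 1))
    by (exists 1; exact Hdom).
  assert (Hlim : filterlim (fun b => RInt (fun t => K / t ^ 2) 1 b) (Rbar_locally p_infty)
                           (locally (K / 1 - 0))).
  { apply (filterlim_ext_loc (fun b => K / 1 - K / b)).
    { exists 0. intros b Hb. symmetry. apply is_RInt_unique, is_RInt_inv_sqr; lra. }
    apply (is_lim_minus (fun _ => K / 1) (fun b => K / b) p_infty (K / 1) 0 (K / 1 - 0));
      [apply is_lim_const | apply is_lim_div_p_infty | reflexivity]. }
  destruct (ex_filterlim_RInt_comparison _ _ 1 _ _ (Rbar_locally_filter p_infty) Hnear Hlim)
    as [l Hl].
  exists l. split.
  - exact (is_RInt_gen_at_point_l _ _ _ _ _ (filter_imp _ _ (fun b Hb => proj1 Hb) Hnear) Hl).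
  - assert (Hle : Rbar_le (RInt (gamma_integrand s) 1 2) l).
    { apply (filterlim_le (F := Rbar_locally p_infty) (fun _ => RInt (gamma_integrand s) 1 2)
                          (fun b => RInt (gamma_integrand s) 1 b)).
      - exists 2. intros b Hb.
        destruct (RInt_increment_bounds _ _ 1 2 b ltac:(lra) (Hdom 2 ltac:(lra))
                                        (Hdom b ltac:(lra))).
        lra.
      - apply filterlim_const.
      - exact Hl. }
    simpl in Hle. eapply Rlt_le_trans; [| exact Hle].
    apply RInt_gt_0; [lra | intros x _; apply gamma_integrand_pos |].
    intros x Hx. apply gamma_integrand_continuous. lra.
Qed.

Lemma Gamma_pos (s : R) : 1 <= s -> 0 < Gamma s.
Proof.
  intros Hs.
  destruct (is_RInt_gen_gamma_head s Hs) as [l1 [H1 P1]].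
  destruct (is_RInt_gen_gamma_tail s ltac:(lra)) as [l2 [H2 P2]].
  unfold Gamma. change (fun t => Rpower t (s - 1) * exp (- t)) with (gamma_integrand s).
  rewrite (is_RInt_gen_unique _ _ (is_RInt_gen_Chasles _ 1 l1 l2 H1 H2)).
  unfold plus; simpl. lra.
Qed.

Lemma filter_prod_segment_pos :
  filter_prod (at_right 0) (Rbar_locally p_infty)
    (fun ab => forall x, Rmin (fst ab) (snd ab) <= x <= Rmax (fst ab) (snd ab) -> 0 < x).
Proof.
  apply Filter_prod with (fun a => 0 < a) (fun b => 0 < b).
  - exists (mkposreal 1 Rlt_0_1). intros y _ Hy. exact Hy.
  - exists 0. intros b Hb. exact Hb.
  - intros a b Ha Hb x [Hx _]. simpl in Hx.
    apply Rlt_le_trans with (Rmin a b); [apply Rmin_case |]; assumption.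
Qed.

Lemma is_lim_Rpower_neg (a : R) : 0 < a -> is_lim (fun u => Rpower u (- a)) p_infty 0.
Proof.
  intros Ha. unfold Rpower.
  apply (is_lim_comp exp (fun u => - a * ln u) p_infty 0 m_infty).
  - exact is_lim_exp_m.
  - replace m_infty with (Rbar_mult (- a) p_infty)
      by (apply is_Rbar_mult_unique, is_Rbar_mult_sym, is_Rbar_mult_p_infty_neg; simpl; lra).
    apply is_lim_scal_l, is_lim_ln_p.
  - exists 0. intros u _. discriminate.
Qed.

Section PowerLaw.

Variables T k : R.
Hypothesis (HT : 0 < T) (Hk : 0 < k).

Let power_law (E : R) : R := Rpower (1 + E / T) (- (k + 1)).
Let primitive (E : R) : R := - (T / k) * Rpower (1 + E / T) (- k).

Lemma power_law_base_pos (x : R) : 0 <= x -> 0 < 1 + x / T.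
Proof. intros Hx. pose proof (Rdiv_le_0_compat x T Hx HT). lra. Qed.

Lemma is_derive_primitive (x : R) : 0 <= x -> is_derive primitive x (power_law x).
Proof.
  intros Hx. pose proof (power_law_base_pos x Hx) as Hb.
  unfold primitive, power_law, Rpower. auto_derive; [exact Hb |].
  replace (- (k + 1) * ln (1 + x / T)) with (- k * ln (1 + x / T) + - ln (1 + x / T)) by ring.
  rewrite exp_plus, exp_Ropp, exp_ln by exact Hb. unfold Rdiv in *. field. split; lra.
Qed.

Lemma power_law_continuous (x : R) : 0 <= x -> continuous power_law x.
Proof.
  intros Hx. apply (ex_derive_continuous (V := R_NormedModule)).
  unfold power_law, Rpower. auto_derive. exact (power_law_base_pos x Hx).
Qed.

Lemma primitive_lim_p_infty : filterlim primitive (Rbar_locally p_infty) (locally 0).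
Proof.
  replace 0 with (- (T / k) * 0) by ring.
  apply (is_lim_scal_l (fun E => Rpower (1 + E / T) (- k)) _ p_infty 0).
  apply (is_lim_comp (fun u => Rpower u (- k)) (fun E => 1 + E / T) p_infty 0 p_infty).
  - apply is_lim_Rpower_neg, Hk.
  - intros P [M HM]. exists (T * M). intros x Hx. apply HM.
    apply Rlt_trans with (x / T); [| lra].
    apply Rmult_lt_reg_l with T; [exact HT |]. field_simplify; lra.
  - exists 0. intros x _. discriminate.
Qed.

Lemma is_RInt_gen_power_law :
  is_RInt_gen power_law (at_right 0) (Rbar_locally p_infty) (T / k).
Proof.
  pose proof filter_prod_segment_pos as Hseg.
  assert (HDerive : forall x, 0 < x -> Derive primitive x = power_law x)
    by (intros x Hx; apply is_derive_unique, is_derive_primitive; lra).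
  assert (HDcont : forall x, 0 < x -> continuous (Derive primitive) x).
  { intros x Hx. apply continuous_ext_loc with power_law.
    - exists (mkposreal x Hx). intros y Hy.
      change (Rabs (y - x) < x) in Hy. apply Rabs_def2 in Hy. symmetry. apply HDerive. lra.
    - apply power_law_continuous. lra. }
  apply is_RInt_gen_ext with (Derive primitive).
  { eapply filter_imp; [| exact Hseg]. intros ab Hab x Hx.
    apply HDerive, Hab. lra. }
  replace (T / k) with (0 - primitive 0)
    by (unfold primitive, Rpower; rewrite Rdiv_0_l, Rplus_0_r, ln_1, Rmult_0_r, exp_0; ring).
  apply is_RInt_gen_Derive.
  - eapply filter_imp; [| exact Hseg]. intros ab Hab x Hx.
    eexists. apply is_derive_primitive. left. exact (Hab x Hx).
  - apply (filter_imp _ _ (fun ab Hab x Hx => HDcont x (Hab x Hx)) Hseg).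
  - eapply filterlim_filter_le_1; [apply filter_le_within |].
    apply (ex_derive_continuous (V := R_NormedModule)).
    exists (power_law 0). apply is_derive_primitive. lra.
  - exact primitive_lim_p_infty.
Qed.

End PowerLaw.

Lemma T0_pos (kappa Teff : R) : 3/2 < kappa -> 0 < Teff -> 0 < T0 kappa Teff.
Proof. intros Hk HT. unfold T0. apply Rmult_lt_0_compat; lra. Qed.

Lemma kappa_norm_pos (kappa Teff : R) : 3/2 < kappa -> 0 < kappa_norm kappa Teff.
Proof.
  intros Hk. unfold kappa_norm.
  apply Rmult_lt_0_compat; [apply Rmult_lt_0_compat |].
  - apply Rdiv_lt_0_compat; [lra | apply sqrt_lt_R0, PI_RGT_0].
  - apply Rdiv_lt_0_compat; apply Gamma_pos; lra.
  - apply exp_pos.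
Qed.

Lemma f_kappa_v_0 (kappa Teff : R) : f_kappa_v kappa Teff 0 = kappa_norm kappa Teff.
Proof.
  unfold f_kappa_v, Rpower. rewrite Rdiv_0_l, Rplus_0_r, ln_1, Rmult_0_r, exp_0. ring.
Qed.

Lemma mean_inv_sqrtE_eq (kappa Teff : R) : 0 < kappa -> 0 < T0 kappa Teff ->
  mean_inv_sqrtE kappa Teff = kappa_norm kappa Teff * (T0 kappa Teff / kappa).
Proof.
  intros Hk HT. unfold mean_inv_sqrtE. apply is_RInt_gen_unique.
  set (N := kappa_norm kappa Teff). set (T := T0 kappa Teff).
  apply (is_RInt_gen_ext (fun E => N * Rpower (1 + E / T) (- (kappa + 1)))).
  2:{ apply (is_RInt_gen_scal _ N (T / kappa)), is_RInt_gen_power_law; assumption. }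
  eapply filter_imp; [| exact filter_prod_segment_pos]. intros ab Hab x Hx.
  assert (Hsqrt : 0 < sqrt x) by (apply sqrt_lt_R0, Hab; lra).
  (* [field] needs the equation at type [R], not at the carrier of [R_NormedModule]. *)
  change (@eq R (N * Rpower (1 + x / T) (- (kappa + 1))) (/ sqrt x * f_kappa_E kappa Teff x)).
  unfold f_kappa_E. fold N T. field. lra.
Qed.

Lemma T_B_eq (kappa Teff : R) : 3/2 < kappa -> 0 < Teff ->
  T_B kappa Teff = (kappa - 3/2) / kappa * Teff.
Proof.
  intros Hk HT. pose proof (kappa_norm_pos kappa Teff Hk).
  unfold T_B. rewrite mean_inv_sqrtE_eq, f_kappa_v_0 by (try apply T0_pos; lra).
  unfold T0. field. lra.
Qed.

Theorem corollary1 (kappa Teff T_EUV eps_EUV : R) :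
  3/2 < kappa -> 0 < Teff -> 0 < T_EUV ->
  T_EUV = Teff * (1 + eps_EUV) ->
  T_EUV / T_B kappa Teff = kappa / (kappa - 3/2) * (1 + eps_EUV).
Proof.
  intros Hk HT _ ->. rewrite T_B_eq by assumption. field. lra.
Qed.
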